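(* In the standing setting, let $k_1,k_2>0$, $\beta_{\min}\in(\beta_{\mathrm{crit}},1]$, $\beta:[0,\infty)\to[\beta_{\min},1]$ continuous, apply the relieved control law, and let $t_s>0$. If $\mathbf z_0\in\mathcal B:=\{\mathbf x\in\mathbb R^6:\rho\|\mathbf x\|<r\}$, then $\mathbf z_0\in\mathcal E$, and the closed-loop solution satisfies, for all $t\in[0,t_s]$, $$\|\mathbf f_a(t,\mathbf z_1(t))\|\le\sum_{j=1}^P\mu_j\psi_j(\|\mathbf z_0\|,t)\le\phi(\|\mathbf z_0\|),$$ where $$\psi_j(s,t)=\frac{\|\mathbf w_j(t)\|_1}{(\|\mathbf w_j(t)\|-\rho se^{-\theta t})^3}-\frac{\|\mathbf w_j(t)\|_1}{\|\mathbf w_j(t)\|^3}+\frac{\sqrt3\,\rho se^{-\theta t}}{(\|\mathbf w_j(t)\|-\rho se^{-\theta t})^3},\qquad \phi(s)=\max_{t\in[0,t_s]}\sum_{j=1}^P\mu_j\psi_j(s,t).$$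
   Context: Standing setting: Let $P\ge1$. For $j=1,\dots,P$ let $\mu_j>0$ and let $\mathbf r_j:[0,\infty)\to\mathbb R^3$ be continuously differentiable, with $\mathbf r_1\equiv\mathbf 0$. Let $\mathbf r^*:[0,\infty)\to\mathbb R^3$ be continuously differentiable (the target trajectory) with $\mathbf r^*(t)\neq\mathbf r_j(t)$ for all $t\ge0$ and all $j$, and set $\mathbf w_j(t):=\mathbf r_j(t)-\mathbf r^*(t)$. For $t\ge0$ and $\mathbf z_1\in\mathbb R^3$ with $\mathbf z_1\ne\mathbf w_j(t)$ for all $j$, define $$\mathbf f_a(t,\mathbf z_1)=\sum_{j=1}^P\mu_j\left(\frac{\mathbf w_j(t)-\mathbf z_1}{\|\mathbf w_j(t)-\mathbf z_1\|^3}-\frac{\mathbf w_j(t)}{\|\mathbf w_j(t)\|^3}\right).$$ The controlled error dynamics are $\dot{\mathbf z}_1(t)=\mathbf z_2(t)$, $\dot{\mathbf z}_2(t)=\mathbf f_a(t,\mathbf z_1(t))+\mathbf u(t)$, with state $\mathbf z=(\mathbf z_1,\mathbf z_2)\in\mathbb R^6$, control $\mathbf u(t)\in\mathbb R^3$, initial time $0$ and $\mathbf z_0:=\mathbf z(0)$, defined on $\mathcal D(t)=\{(\mathbf x,\mathbf y)\in\mathbb R^6:\mathbf x\neq\mathbf w_j(t),\ j=1,\dots,P\}$. $\|\cdot\|$ is the Euclidean norm and $\|\cdot\|_1$ the $\ell_1$ norm; $\lambda_{\min},\lambda_{\max}$ denote smallest/largest eigenvalues. Relieved control law: $\mathbf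 u(t)=-\beta(t)\big[(1+k_1k_2)\mathbf z_1(t)+(k_1+k_2)\mathbf z_2(t)\big]-\mathbf f_a(t,\mathbf z_1(t))$. Critical relief: $\beta_{\mathrm{crit}}=\dfrac{k_1^4+2k_1k_2+1-2\sqrt{(k_1k_2+1)(k_1k_2+k_1^4)}}{(k_1^2-1)^2}$ if $k_1\ne1$, and $\beta_{\mathrm{crit}}=\dfrac{1}{1+k_2}$ if $k_1=1$. Matrices and constants: $\mathbf X=\begin{bmatrix}(1+k_1^2)\mathbf I_3&k_1\mathbf I_3\\k_1\mathbf I_3&\mathbf I_3\end{bmatrix}$, $\rho=\sqrt{\lambda_{\max}(\mathbf X)/\lambda_{\min}(\mathbf X)}$; $\mathbf U(\beta)=\begin{bmatrix}2(k_1+k_1^2k_2)\beta\,\mathbf I_3 & ((k_1^2+2k_1k_2+1)\beta-k_1^2-1)\mathbf I_3\\ ((k_1^2+2k_1k_2+1)\beta-k_1^2-1)\mathbf I_3 & 2((k_1+k_2)\beta-k_1)\mathbf I_3\end{bmatrix}$; $\theta=\dfrac{\lambda_{\min}(\mathbf U(\beta_{\min}))}{2\lambda_{\max}(\mathbf X)}$; $r=\min_{j=1,\dots,P,\ t\in[0,t_s]}\|\mathbf w_j(t)\|$; $\mathcal E=\{\mathbf y\in\mathbb R^6:\mathbf y^T\mathbf X\mathbf y<\lambda_{\min}(\mathbf X)r^2\}$. *)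

From HB Require Import structures.
From mathcomp Require Import all_boot all_order all_algebra.
From mathcomp Require Import all_classical all_reals all_analysis.
Set Implicit Arguments. Unset Strict Implicit. Unset Printing Implicit Defensive.
Import Order.TTheory GRing.Theory Num.Theory.
Import numFieldNormedType.Exports.
Local Open Scope classical_set_scope.
Local Open Scope ring_scope.

Section Defs.
Variable R : realType.

Definition enorm (n : nat) (v : 'cV[R]_n) : R := Num.sqrt (\sum_(i < n) v i ord0 ^+ 2).
Definition l1norm (n : nat) (v : 'cV[R]_n) : R := \sum_(i < n) `|v i ord0|.

Definition lam_max (n : nat) (A : 'M[R]_n) : R := sup [set a : R | eigenvalue A a].
Definition lam_min (n : nat) (A : 'M[R]_n) : R := inf [set a : R | eigenvalue A a].

Definition qform (n : nat) (A : 'M[R]_n) (y : 'cV[R]_n) : R := ((y^T *m A *m y) ord0 ord0).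

Definition f_a (P : nat) (mu : 'I_P -> R) (w : 'I_P -> R -> 'cV[R]_3) (t : R) (z1 : 'cV[R]_3)
  : 'cV[R]_3 :=
  \sum_(j < P) mu j *: ((enorm (w j t - z1) ^+ 3)^-1 *: (w j t - z1)
                        - (enorm (w j t) ^+ 3)^-1 *: w j t).

Definition beta_crit (k1 k2 : R) : R :=
  if k1 == 1 then 1 / (1 + k2)
  else (k1 ^+ 4 + 2 * k1 * k2 + 1
        - 2 * Num.sqrt ((k1 * k2 + 1) * (k1 * k2 + k1 ^+ 4))) / (k1 ^+ 2 - 1) ^+ 2.

Definition Xmat (k1 : R) : 'M[R]_(3 + 3) :=
  block_mx ((1 + k1 ^+ 2)%:M) (k1%:M) (k1%:M) (1%:M).

Definition Umat (k1 k2 beta : R) : 'M[R]_(3 + 3) :=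
  let off := (k1 ^+ 2 + 2 * k1 * k2 + 1) * beta - k1 ^+ 2 - 1 in
  block_mx ((2 * (k1 + k1 ^+ 2 * k2) * beta)%:M) (off%:M)
           (off%:M) ((2 * ((k1 + k2) * beta - k1))%:M).

Definition rho (k1 : R) : R := Num.sqrt (lam_max (Xmat k1) / lam_min (Xmat k1)).

Definition theta (k1 k2 beta_min : R) : R :=
  lam_min (Umat k1 k2 beta_min) / (2 * lam_max (Xmat k1)).

Definition rmin (P : nat) (w : 'I_P -> R -> 'cV[R]_3) (ts : R) : R :=
  inf [set x : R | exists j : 'I_P, exists t : R, 0 <= t <= ts /\ x = enorm (w j t)].

Definition Eset (k1 : R) (r : R) : set 'cV[R]_(3 + 3) :=
  [set y | qform (Xmat k1) y < lam_min (Xmat k1) * r ^+ 2].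

Definition Bset (k1 : R) (r : R) : set 'cV[R]_(3 + 3) :=
  [set x | rho k1 * enorm x < r].

Definition psi (rh th : R) (wjt : 'cV[R]_3) (s t : R) : R :=
  let d := enorm wjt - rh * s * expR (- (th * t)) in
  l1norm wjt / d ^+ 3 - l1norm wjt / enorm wjt ^+ 3
  + Num.sqrt 3 * rh * s * expR (- (th * t)) / d ^+ 3.

Definition psi_sum (P : nat) (mu : 'I_P -> R) (w : 'I_P -> R -> 'cV[R]_3)
  (rh th s t : R) : R :=
  \sum_(j < P) mu j * psi rh th (w j t) s t.

Definition phi (P : nat) (mu : 'I_P -> R) (w : 'I_P -> R -> 'cV[R]_3)
  (rh th ts s : R) : R :=
  sup [set x : R | exists t : R, 0 <= t <= ts /\ x = psi_sum mu w rh th s t].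

Definition C1_nonneg (V : normedModType R) (f : R -> V) : Prop :=
  exists f' : R -> V,
    {within `[0, +oo[, continuous f'} /\
    (forall t : R, 0 < t -> is_derive t 1 f (f' t)) /\
    ((fun h : R => h^-1 *: (f h - f 0)) @ 0^'+ --> f' 0).

End Defs.

From HB Require Import structures.
From mathcomp Require Import all_boot all_order all_algebra.
From mathcomp Require Import all_classical all_reals all_analysis.
From mathcomp Require Import ring lra.
Set Implicit Arguments. Unset Strict Implicit. Unset Printing Implicit Defensive.
Import Order.TTheory GRing.Theory Num.Theory.
Import numFieldNormedType.Exports.
Local Open Scope classical_set_scope.
Local Open Scope ring_scope.

(* The relieved control cancels the gravitational term, so every coordinate pair of
   (z1, z2) solves a linear time-varying system.  Along it the Lyapunov function
   V = z^T X z has V' = -z^T U(beta) z; since U(beta) is affine in beta, and at both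
   endpoints beta_min and 1 dominates 2 theta X (this is where beta_min > beta_crit is
   used), V' <= -2 theta V and V decays like e^{-2 theta t}.  Comparing V with the extreme
   eigenvalues of the block matrix X yields ||z1(t)|| <= rho ||z0|| e^{-theta t} < r, and
   then each term of f_a is bounded by the triangle inequality and the monotonicity of
   1/d^3 in the distance d to the attracting body.  The last inequality holds because psi
   stays bounded on [0, t_s], so its supremum phi dominates it. *)

Lemma sqrtr_le (R : realType) (x y : R) : 0 <= y -> x <= y ^+ 2 -> Num.sqrt x <= y.
Proof. by move=> y0 xy; rewrite -(ger0_norm y0) -sqrtr_sqr ler_wsqrtr. Qed.

Section EuclideanNorm.
Variables (R : realType) (n : nat).
Implicit Types (u v : 'cV[R]_n) (a b : 'I_n -> R).

Lemma sum_CauchySchwarz a b :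
  (\sum_i a i * b i) ^+ 2 <= (\sum_i a i ^+ 2) * (\sum_i b i ^+ 2).
Proof.
set A := \sum_i a i ^+ 2; set B := \sum_i a i * b i; set C := \sum_i b i ^+ 2.
have A0 : 0 <= A by rewrite sumr_ge0 // => i _; rewrite sqr_ge0.
have [A_eq0|A_neq0] := eqVneq A 0.
  have a0 i : a i = 0.
    have a2_eq0 := psumr_eq0P (fun j _ => sqr_ge0 (a j)) A_eq0.
    by apply/eqP; rewrite -sqrf_eq0 a2_eq0.
  by rewrite A_eq0 /B big1 ?expr0n ?mul0r // => i _; rewrite a0 mul0r.
have expand : \sum_i (A * b i - B * a i) ^+ 2 = A * (A * C - B ^+ 2).
  transitivity (A ^+ 2 * \sum_i b i ^+ 2 - 2 * A * B * \sum_i a i * b i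
                + B ^+ 2 * \sum_i a i ^+ 2); last by rewrite -/A -/B -/C; ring.
  rewrite [A ^+ 2 * _]mulr_sumr [2 * A * B * _]mulr_sumr [B ^+ 2 * _]mulr_sumr.
  rewrite -sumrB -big_split /=.
  by apply: eq_bigr => i _; ring.
have : 0 <= A * (A * C - B ^+ 2) by rewrite -expand sumr_ge0 // => i _; rewrite sqr_ge0.
by rewrite pmulr_rge0 ?subr_ge0 // lt_def A_neq0.
Qed.

Lemma enorm_ge0 v : 0 <= enorm v.
Proof. exact: sqrtr_ge0. Qed.

Lemma enorm_sqr v : enorm v ^+ 2 = \sum_i v i ord0 ^+ 2.
Proof. by rewrite sqr_sqrtr // sumr_ge0 // => i _; rewrite sqr_ge0. Qed.

Lemma enorm0 : enorm (0 : 'cV[R]_n) = 0.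
Proof. by rewrite /enorm big1 ?sqrtr0 // => i _; rewrite mxE expr0n. Qed.

Lemma enormZ (c : R) v : enorm (c *: v) = `|c| * enorm v.
Proof.
rewrite /enorm -sqrtr_sqr -sqrtrM ?sqr_ge0 // mulr_sumr.
by congr Num.sqrt; apply: eq_bigr => i _; rewrite mxE exprMn.
Qed.

Lemma enormN v : enorm (- v) = enorm v.
Proof. by rewrite -scaleN1r enormZ normrN1 mul1r. Qed.

Lemma enormD u v : enorm (u + v) <= enorm u + enorm v.
Proof.
apply: sqrtr_le; first by rewrite addr_ge0 ?enorm_ge0.
have CS : \sum_i u i ord0 * v i ord0 <= enorm u * enorm v.
  apply: le_trans (ler_norm _) _.
  rewrite -ler_sqr ?nnegrE ?mulr_ge0 ?enorm_ge0 // real_normK ?num_real //.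
  by rewrite exprMn !enorm_sqr sum_CauchySchwarz.
rewrite sqrrD !enorm_sqr.
under eq_bigr do rewrite !mxE sqrrD.
by rewrite !big_split /= lerD2r lerD2l mulr2n lerD.
Qed.

Lemma enorm_sum (I : finType) (F : I -> 'cV[R]_n) :
  enorm (\sum_i F i) <= \sum_i enorm (F i).
Proof.
apply: (big_ind2 (fun x y => enorm x <= y)) => //; first by rewrite enorm0.
by move=> x1 x2 y1 y2 h1 h2; apply: le_trans (enormD _ _) (lerD h1 h2).
Qed.

Lemma enormB_ge u v : enorm u - enorm v <= enorm (u - v).
Proof. by rewrite lerBlDr -{1}(subrK v u) enormD. Qed.

Lemma enormB_le u v : enorm (u - v) <= enorm u + enorm v.
Proof. by rewrite -(enormN v) enormD. Qed.

Lemma enorm_le_l1norm v : enorm v <= l1norm v.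
Proof.
apply: sqrtr_le; first by rewrite sumr_ge0.
rewrite [X in _ <= X]expr2 mulr_sumr; apply: ler_sum => i _.
rewrite -real_normK ?num_real // expr2 ler_wpM2r //.
by rewrite /l1norm (bigD1 i) //= lerDl sumr_ge0.
Qed.

Lemma l1norm_le_sqrt_enorm v : l1norm v <= Num.sqrt n%:R * enorm v.
Proof.
rewrite -sqrtrM // -[l1norm v]ger0_norm ?sumr_ge0 // -sqrtr_sqr ler_wsqrtr //.
have := sum_CauchySchwarz (fun i => `|v i ord0|) (fun=> 1).
rewrite /l1norm; under eq_bigr do rewrite mulr1.
under [in X in _ <= X -> _]eq_bigr do rewrite real_normK ?num_real //.
by rewrite expr1n sumr_const card_ord mulrC.
Qed.

End EuclideanNorm.

Lemma enorm_col_mx_sqr (R : realType) (m n : nat) (p : 'cV[R]_m) (q : 'cV[R]_n) :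
  enorm (col_mx p q) ^+ 2 = enorm p ^+ 2 + enorm q ^+ 2.
Proof.
rewrite !enorm_sqr big_split_ord /=.
by congr (_ + _); apply: eq_bigr => i _; rewrite ?col_mxEu ?col_mxEd.
Qed.

Section Symmetric2.
Variables (R : realType) (a b c : R).

Definition qsym2 (x y : R) : R := a * x ^+ 2 + 2 * b * x * y + c * y ^+ 2.

Definition disc2 : R := Num.sqrt (((a - c) / 2) ^+ 2 + b ^+ 2).
Definition eigmin2 : R := (a + c) / 2 - disc2.
Definition eigmax2 : R := (a + c) / 2 + disc2.

Lemma disc2_ge0 : 0 <= disc2.
Proof. exact: sqrtr_ge0. Qed.

Lemma disc2_sqr : disc2 ^+ 2 = ((a - c) / 2) ^+ 2 + b ^+ 2.
Proof. by rewrite sqr_sqrtr // addr_ge0 ?sqr_ge0. Qed.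

Lemma eigmin2_le_eigmax2 : eigmin2 <= eigmax2.
Proof.
by rewrite /eigmin2 /eigmax2 lerD2l lerNl (le_trans _ disc2_ge0) // oppr_le0 disc2_ge0.
Qed.

Lemma eigmin2_mul_eigmax2 : eigmin2 * eigmax2 = a * c - b ^+ 2.
Proof. by rewrite /eigmin2 /eigmax2 -subr_sqr disc2_sqr; field. Qed.

Lemma sym2_charP x : (a - x) * (c - x) = b ^+ 2 <-> x = eigmin2 \/ x = eigmax2.
Proof.
have factor : (a - x) * (c - x) - b ^+ 2 = (x - eigmin2) * (x - eigmax2).
  transitivity ((x - (a + c) / 2) ^+ 2 - disc2 ^+ 2); first by rewrite disc2_sqr; field.
  by rewrite /eigmin2 /eigmax2; ring.
split => [h|h].
  have : (x - eigmin2) * (x - eigmax2) == 0 by rewrite -factor h subrr.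
  by rewrite mulf_eq0 !subr_eq0 => /orP[] /eqP; [left|right].
by apply/eqP; rewrite -subr_eq0 factor; case: h => ->; rewrite subrr ?mul0r ?mulr0.
Qed.

Lemma eigmin2_ge0 : 0 <= a -> 0 <= c -> b ^+ 2 <= a * c -> 0 <= eigmin2.
Proof.
move=> a0 c0 bac; have := eigmin2_mul_eigmax2; have := eigmin2_le_eigmax2.
have : eigmin2 + eigmax2 = a + c by rewrite /eigmin2 /eigmax2; field.
nra.
Qed.

Lemma eigmin2_gt0 : 0 < a -> 0 < c -> b ^+ 2 < a * c -> 0 < eigmin2.
Proof.
move=> a0 c0 bac; have := eigmin2_mul_eigmax2; have := eigmin2_le_eigmax2.
have : eigmin2 + eigmax2 = a + c by rewrite /eigmin2 /eigmax2; field.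
nra.
Qed.

Lemma eigmin2_le_qsym2 x y : eigmin2 * (x ^+ 2 + y ^+ 2) <= qsym2 x y.
Proof.
(* [a - eigmin2] and [c - eigmin2] are nonnegative with product [b^2], so the shifted
   form is a perfect square up to the factor [a - eigmin2] *)
set A := a - eigmin2; set C := c - eigmin2.
have half_le : ((a - c) / 2) ^+ 2 <= disc2 ^+ 2 by rewrite disc2_sqr lerDl sqr_ge0.
have A0 : 0 <= A by rewrite /A /eigmin2; have := disc2_ge0; nra.
have C0 : 0 <= C by rewrite /C /eigmin2; have := disc2_ge0; nra.
have AC : A * C = b ^+ 2.
  transitivity (disc2 ^+ 2 - ((a - c) / 2) ^+ 2); last by rewrite disc2_sqr; ring.
  by rewrite /A /C /eigmin2; field.
rewrite -subr_ge0 (_ : _ - _ = A * x ^+ 2 + 2 * b * x * y + C * y ^+ 2); last first.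
  by rewrite /qsym2 /A /C; ring.
have [A_eq0|A_neq0] := eqVneq A 0.
  have b0 : b = 0 by apply/eqP; rewrite -sqrf_eq0 -AC A_eq0 mul0r.
  by rewrite A_eq0 b0; nra.
have A_pos : 0 < A by rewrite lt_def A_neq0.
rewrite -(pmulr_rge0 _ A_pos).
have -> : A * (A * x ^+ 2 + 2 * b * x * y + C * y ^+ 2) =
          (A * x + b * y) ^+ 2 + (A * C - b ^+ 2) * y ^+ 2 by ring.
by rewrite AC subrr mul0r addr0 sqr_ge0.
Qed.

End Symmetric2.

Lemma qsym2_le_eigmax2 (R : realType) (a b c x y : R) :
  qsym2 a b c x y <= eigmax2 a b c * (x ^+ 2 + y ^+ 2).
Proof.
have := eigmin2_le_qsym2 (- a) (- b) (- c) x y.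
have -> : eigmin2 (- a) (- b) (- c) = - eigmax2 a b c.
  rewrite /eigmin2 /eigmax2 /disc2.
  have -> : ((- a - - c) / 2) ^+ 2 + (- b) ^+ 2 = ((a - c) / 2) ^+ 2 + b ^+ 2 by ring.
  ring.
rewrite /qsym2; lra.
Qed.

Section ScalarBlock.
Variables (R : realType) (a b c : R).

Definition scalar_block_mx n : 'M[R]_(n + n) := block_mx a%:M b%:M b%:M c%:M.

Lemma qform_scalar_block_mx n (p q : 'cV[R]_n) :
  qform (scalar_block_mx n) (col_mx p q) = \sum_i qsym2 a b c (p i ord0) (q i ord0).
Proof.
rewrite /qform /scalar_block_mx tr_col_mx mul_row_block !mul_mx_scalar mul_row_col.
by rewrite !mxE -big_split /=; apply: eq_bigr => i _; rewrite !mxE /qsym2; ring.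
Qed.

Lemma qform_scalar_block_mx_bounds n (v : 'cV[R]_(n + n)) :
  eigmin2 a b c * enorm v ^+ 2 <= qform (scalar_block_mx n) v <=
  eigmax2 a b c * enorm v ^+ 2.
Proof.
rewrite -(vsubmxK v) enorm_col_mx_sqr !enorm_sqr qform_scalar_block_mx -big_split /=.
rewrite !mulr_sumr; apply/andP; split; apply: ler_sum => i _.
  exact: eigmin2_le_qsym2.
exact: qsym2_le_eigmax2.
Qed.

Lemma eigenvalue_scalar_block_mx n x :
  eigenvalue (scalar_block_mx n) x -> (a - x) * (c - x) = b ^+ 2.
Proof.
case/eigenvalueP => v; rewrite -[v]hsubmxK; move: (lsubmx v) (rsubmx v) => p q.
rewrite mul_row_block !mul_mx_scalar scale_row_mx => /eq_row_mx[eq_p eq_q].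
apply: contraTeq; rewrite -subr_eq0 => D_neq0; rewrite negbK; apply/eqP.
set D := _ - _ in D_neq0.
have pq0 j : p 0 j = 0 /\ q 0 j = 0.
  move/matrixP/(_ 0 j): eq_p; move/matrixP/(_ 0 j): eq_q; rewrite !mxE.
  set P := p 0 j; set Q := q 0 j => eq_q eq_p.
  have DP : D * P = (c - x) * (a * P + b * Q - x * P) - b * (b * P + c * Q - x * Q).
    by rewrite /D; ring.
  have DQ : D * Q = (a - x) * (b * P + c * Q - x * Q) - b * (a * P + b * Q - x * P).
    by rewrite /D; ring.
  rewrite eq_p eq_q !subrr !mulr0 subrr in DP DQ.
  by split; apply/eqP; [move/eqP: DP | move/eqP: DQ]; rewrite mulf_eq0 (negbTE D_neq0).
have [-> ->] : p = 0 /\ q = 0.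
  by split; apply/matrixP => i j; rewrite (ord1 i) mxE; case: (pq0 j).
exact: row_mx0.
Qed.

Lemma sym2_eigvec x : (a - x) * (c - x) = b ^+ 2 ->
  exists P Q : R, [/\ (P != 0) || (Q != 0), a * P + b * Q = x * P & b * P + c * Q = x * Q].
Proof.
move=> char; have [b0|b_neq0] := eqVneq b 0; last first.
  exists b, (x - a); rewrite b_neq0; split => //; first by ring.
  transitivity (x * (x - a) + (b ^+ 2 - (a - x) * (c - x))); first by ring.
  by rewrite char subrr addr0.
rewrite b0 expr0n /= in char; move/eqP: char; rewrite mulf_eq0 !subr_eq0.
by case/orP=> /eqP->; [exists 1, 0 | exists 0, 1];
  rewrite b0 oner_eq0 ?eqxx //=; split => //; ring.
Qed.

Lemma scalar_block_mx_eigenvalueP n x :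
  eigenvalue (scalar_block_mx n.+1) x <-> (a - x) * (c - x) = b ^+ 2.
Proof.
split; first exact: eigenvalue_scalar_block_mx.
case/sym2_eigvec => P [Q] [PQ_neq0 eP eQ]; apply/eigenvalueP.
exists (row_mx (P *: const_mx 1) (Q *: const_mx 1)).
  rewrite mul_row_block !mul_mx_scalar scale_row_mx !scalerA -!scalerDl.
  by rewrite [b * Q]mulrC -eP [c * Q]mulrC -eQ; congr row_mx; congr (_ *: _); ring.
apply: contraTneq PQ_neq0 => /matrixP v0; rewrite negb_or !negbK.
have := v0 0 (lshift _ ord0); have := v0 0 (rshift _ ord0).
by rewrite row_mxEl row_mxEr !mxE !mulr1 => -> ->; rewrite eqxx.
Qed.

Lemma eigenvalue_set_scalar_block_mx n :
  [set x : R | eigenvalue (scalar_block_mx n.+1) x] =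
  [set eigmin2 a b c] `|` [set eigmax2 a b c].
Proof. by apply/seteqP; split => x /=; rewrite scalar_block_mx_eigenvalueP sym2_charP. Qed.

Lemma lam_min_scalar_block_mx n : lam_min (scalar_block_mx n.+1) = eigmin2 a b c.
Proof.
rewrite /lam_min eigenvalue_set_scalar_block_mx inf_setU ?inf1 ?has_inf1 //.
by move=> _ _ -> ->; exact: eigmin2_le_eigmax2.
Qed.

Lemma lam_max_scalar_block_mx n : lam_max (scalar_block_mx n.+1) = eigmax2 a b c.
Proof.
rewrite /lam_max eigenvalue_set_scalar_block_mx sup_setU ?sup1 ?has_sup1 //.
by move=> _ _ -> ->; exact: eigmin2_le_eigmax2.
Qed.

End ScalarBlock.

Section Gains.
Variables (R : realType) (k1 k2 : R).

Definition lyap2 (x y : R) : R := qsym2 (1 + k1 ^+ 2) k1 1 x y.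

Definition dissip (be x y : R) : R :=
  qsym2 (2 * (k1 + k1 ^+ 2 * k2) * be) ((k1 ^+ 2 + 2 * k1 * k2 + 1) * be - k1 ^+ 2 - 1)
        (2 * ((k1 + k2) * be - k1)) x y.

Lemma lyap2E x y : lyap2 x y = x ^+ 2 + (k1 * x + y) ^+ 2.
Proof. by rewrite /lyap2 /qsym2; ring. Qed.

Lemma lam_min_Xmat : lam_min (Xmat k1) = eigmin2 (1 + k1 ^+ 2) k1 1.
Proof. exact: (lam_min_scalar_block_mx _ _ _ 2). Qed.

Lemma lam_max_Xmat : lam_max (Xmat k1) = eigmax2 (1 + k1 ^+ 2) k1 1.
Proof. exact: (lam_max_scalar_block_mx _ _ _ 2). Qed.

Lemma lam_min_Xmat_gt0 : 0 < lam_min (Xmat k1).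
Proof. by rewrite lam_min_Xmat eigmin2_gt0 //; nra. Qed.

Lemma lam_min_le_max_Xmat : lam_min (Xmat k1) <= lam_max (Xmat k1).
Proof. by rewrite lam_min_Xmat lam_max_Xmat eigmin2_le_eigmax2. Qed.

Lemma rho_sqr : rho k1 ^+ 2 = lam_max (Xmat k1) / lam_min (Xmat k1).
Proof.
by rewrite sqr_sqrtr // divr_ge0 // (le_trans (ltW lam_min_Xmat_gt0)) ?lam_min_le_max_Xmat.
Qed.

Hypotheses (k1_gt0 : 0 < k1) (k2_gt0 : 0 < k2).

(* [beta_crit k1 k2] is the smaller root of the quadratic [det U(beta) = 0], so a relief
   above it makes [U(beta)] positive definite *)
Lemma Umat_det_gt0 bm : beta_crit k1 k2 < bm -> bm <= 1 ->
  0 < 4 * k1 * (bm * (k1 + k2) - k1) - (1 - bm) ^+ 2 * (k1 ^+ 2 - 1) ^+ 2.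
Proof.
rewrite /beta_crit; have [->|k1_neq1] := eqVneq k1 1.
  rewrite ltr_pdivrMr; last by rewrite addr_gt0.
  by move=> bc bm1; rewrite expr1n subrr; nra.
set D := (k1 ^+ 2 - 1) ^+ 2.
have D_gt0 : 0 < D.
  rewrite /D lt_def sqr_ge0 sqrf_eq0 subr_eq0 sqrf_eq1 negb_or k1_neq1 andbT.
  by apply/eqP => k1N1; move: k1_gt0; rewrite k1N1; lra.
set S := Num.sqrt _; set N := k1 ^+ 4 + 2 * k1 * k2 + 1.
have S_ge0 : 0 <= S by exact: sqrtr_ge0.
have S2 : S ^+ 2 = (k1 * k2 + 1) * (k1 * k2 + k1 ^+ 4).
  by rewrite sqr_sqrtr // mulr_ge0 // addr_ge0 ?exprn_ge0 ?mulr_ge0 ?ltW.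
rewrite ltr_pdivrMr // => bc bm1.
have factor : D * ((1 - bm) ^+ 2 * (k1 ^+ 2 - 1) ^+ 2 - 4 * k1 * (bm * (k1 + k2) - k1)) =
    (bm * D - N - 2 * S) * (bm * D - N + 2 * S).
  transitivity ((bm * D - N) ^+ 2 - 4 * S ^+ 2); last by ring.
  by rewrite S2 /D /N; ring.
have root2 : bm * D - N - 2 * S < 0.
  have : N - D = 2 * k1 ^+ 2 + 2 * k1 * k2 by rewrite /N /D; ring.
  have := ler_wpM2r (ltW D_gt0) bm1; have := mulr_gt0 k1_gt0 k2_gt0; nra.
have : D * ((1 - bm) ^+ 2 * (k1 ^+ 2 - 1) ^+ 2 - 4 * k1 * (bm * (k1 + k2) - k1)) < 0.
  by rewrite factor; nra.
by rewrite pmulr_rlt0 // /D; lra.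
Qed.

Variable bm : R.
Hypotheses (bm_gt_crit : beta_crit k1 k2 < bm) (bm_le1 : bm <= 1).

Lemma relief_gt : k1 < bm * (k1 + k2).
Proof.
have : 0 < (4 * k1) * (bm * (k1 + k2) - k1).
  have := Umat_det_gt0 bm_gt_crit bm_le1.
  have := sqr_ge0 ((1 - bm) * (k1 ^+ 2 - 1)); rewrite exprMn; lra.
by rewrite pmulr_rgt0 ?mulr_gt0 // subr_gt0.
Qed.

Lemma relief_gt0 : 0 < bm.
Proof. by rewrite -(pmulr_lgt0 _ (addr_gt0 k1_gt0 k2_gt0)) (lt_trans k1_gt0 relief_gt). Qed.

Lemma lam_min_Umat_ge0 : 0 <= lam_min (Umat k1 k2 bm).
Proof.
rewrite (lam_min_scalar_block_mx _ _ _ 2) eigmin2_ge0 //.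
- by rewrite !mulr_ge0 ?addr_ge0 ?mulr_ge0 ?exprn_ge0 ?ltW ?relief_gt0.
- by rewrite mulr_ge0 // subr_ge0 ltW // mulrC relief_gt.
- apply/ltW; rewrite -subr_gt0; move: (Umat_det_gt0 bm_gt_crit bm_le1).
  by congr (0 < _); ring.
Qed.

Lemma theta_ge0 : 0 <= theta k1 k2 bm.
Proof.
by rewrite divr_ge0 ?lam_min_Umat_ge0 // mulr_ge0 // ltW // (lt_le_trans lam_min_Xmat_gt0)
  ?lam_min_le_max_Xmat.
Qed.

Lemma dissip_relief_ge_lyap x y :
  2 * theta k1 k2 bm * lyap2 x y <= dissip bm x y.
Proof.
set L := lam_max (Xmat k1).
have L_gt0 : 0 < L := lt_le_trans lam_min_Xmat_gt0 lam_min_le_max_Xmat.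
have -> : 2 * theta k1 k2 bm = lam_min (Umat k1 k2 bm) / L.
  by rewrite /theta -/L; field; rewrite gt_eqF.
apply: le_trans (_ : lam_min (Umat k1 k2 bm) * (x ^+ 2 + y ^+ 2) <= _); last first.
  by rewrite (lam_min_scalar_block_mx _ _ _ 2) eigmin2_le_qsym2.
rewrite -mulrA ler_wpM2l ?lam_min_Umat_ge0 // ler_pdivrMl // /L lam_max_Xmat.
exact: qsym2_le_eigmax2.
Qed.

(* [dissip be] is affine in [be]: it suffices to check the two endpoints [bm] and [1] *)
Lemma dissip_ge_lyap be x y : bm <= be <= 1 ->
  2 * theta k1 k2 bm * lyap2 x y <= dissip be x y.
Proof.
case/andP => bm_be be1; set om := 2 * theta k1 k2 bm.
have om_le_k1 : om <= 2 * k1.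
  have := dissip_relief_ge_lyap 1 (- k1); rewrite lyap2E /dissip /qsym2 -/om.
  by congr (_ <= _); ring.
have om_le_k2 : om <= 2 * k2.
  have := dissip_relief_ge_lyap 0 1; rewrite lyap2E /dissip /qsym2 -/om.
  have : (k1 + k2) * bm <= k1 + k2 by rewrite ler_piMr // addr_ge0 ?ltW.
  rewrite (_ : _ * (0 ^+ 2 + _) = om); last by ring.
  rewrite (_ : _ + _ * 1 ^+ 2 = 2 * ((k1 + k2) * bm - k1)); last by ring.
  lra.
have at1 : om * lyap2 x y <= dissip 1 x y.
  rewrite lyap2E (_ : dissip 1 x y = 2 * k1 * x ^+ 2 + 2 * k2 * (k1 * x + y) ^+ 2).
    have := ler_wpM2r (sqr_ge0 x) om_le_k1.
    have := ler_wpM2r (sqr_ge0 (k1 * x + y)) om_le_k2; lra.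
  by rewrite /dissip /qsym2; ring.
have [bm_eq1|bm_neq1] := eqVneq bm 1.
  by rewrite (_ : be = 1) //; apply/le_anti; rewrite be1 -bm_eq1.
have bm_lt1 : 0 < 1 - bm by rewrite subr_gt0 lt_neqAle bm_neq1.
rewrite -(ler_pM2l bm_lt1) (_ : _ * dissip be x y =
   (1 - be) * dissip bm x y + (be - bm) * dissip 1 x y); last by rewrite /dissip /qsym2; ring.
have := dissip_relief_ge_lyap x y; rewrite -/om => at_bm.
have := ler_wpM2l (_ : 0 <= 1 - be) at_bm; have := ler_wpM2l (_ : 0 <= be - bm) at1.
rewrite !subr_ge0; lra.
Qed.

End Gains.

Lemma is_derive_expRM (R : realType) (om t : R) :
  is_derive t 1 (fun s => expR (om * s)) (om * expR (om * t)).
Proof.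
have dlin : derivable (fun s : R => om * s) t 1 by apply: ex_derive; apply: is_deriveZ.
have dexp : derivable (@expR R) (om * t) 1 by exact: ex_derive.
apply: DeriveDef.
  by apply/derivable1_diffP/differentiable_comp; exact/derivable1_diffP.
rewrite -derive1E (derive1_comp dlin dexp) !derive1E.
rewrite (@derive_val _ _ _ _ _ _ _ (is_derive_expR (om * t))).
have lin : is_derive t (1 : R) (fun s : R => om * s) (om * 1) by apply: is_deriveZ.
by rewrite (@derive_val _ _ _ _ _ _ _ lin) mulr1 mulrC.
Qed.

Lemma expR_decay_of_deriv (R : realType) (V dV : R -> R) (om ts : R) :
  {within `[0, ts], continuous V} ->
  (forall t, 0 < t < ts -> is_derive t 1 V (dV t)) ->
  (forall t, 0 < t < ts -> dV t <= - (om * V t)) ->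
  forall t, 0 <= t <= ts -> V t * expR (om * t) <= V 0.
Proof.
move=> cV dVt dV_le t /andP[t0 tts].
have dg s : 0 < s < ts -> is_derive s 1 (fun s => V s * expR (om * s))
    (dV s * expR (om * s) + V s * (om * expR (om * s))).
  move=> hs; have := is_deriveM (dVt s hs) (is_derive_expRM om s).
  by move=> h; apply: is_derive_eq; rewrite /GRing.scale /= addrC; congr (_ + _); ring.
have mono : {in `[0, ts] &, {homo (fun s => V s * expR (om * s)) : a b /~ a <= b}}.
  apply: ler0_derive1_le_cc.
  - by move=> s; rewrite in_itv /= => /dg [].
  - move=> s; rewrite in_itv /= => hs; rewrite derive1E (@derive_val _ _ _ _ _ _ _ (dg s hs)).
    have := dV_le s hs; have := expR_gt0 (om * s); nra.
  - have ce : {within `[0, ts], continuous (fun s => expR (om * s))}.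
      apply: continuous_subspaceT => s; apply: continuous_comp; last exact: continuous_expR.
      exact: (continuousM (@cst_continuous _ _ om s) cvg_id).
    by move=> s; exact: (continuousM (cV s) (ce s)).
have := mono t 0; rewrite !in_itv /= lexx t0 tts (le_trans t0 tts).
by rewrite mulr0 expR0 mulr1; apply.
Qed.

Lemma is_derive_coord (R : realType) n (f : R -> 'cV[R]_n) (t : R) (df : 'cV[R]_n) i :
  is_derive t 1 f df -> is_derive t 1 (fun s => f s i ord0) (df i ord0).
Proof.
case=> d dv; apply: DeriveDef; first exact: ((derivable_mxP f t 1).1 d i ord0).
by rewrite -dv (derive_mx d) mxE.
Qed.

Lemma continuous_within_coord (R : realType) n (f : R -> 'cV[R]_n) (ts : R) i :
  {within `[0, ts], continuous f} -> {within `[0, ts], continuous (fun s => f s i ord0)}.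
Proof.
move=> cf s.
change {for s, continuous ((fun M : 'cV[R]_n => M i ord0) \o (from_subspace `[0, ts] f))}.
by apply: continuous_comp; [exact: cf | exact: coord_continuous].
Qed.

Lemma lyap2_closed_loop_deriv (R : realType) (k1 k2 be t : R) (x y : R -> R) :
  is_derive t 1 x (y t) ->
  is_derive t 1 y (- (be * ((1 + k1 * k2) * x t + (k1 + k2) * y t))) ->
  is_derive t 1 (fun s => lyap2 k1 (x s) (y s)) (- dissip k1 k2 be (x t) (y t)).
Proof.
move=> dx dy.
have dxy : is_derive t 1 (fun s => k1 * x s + y s)
    (k1 * y t - be * ((1 + k1 * k2) * x t + (k1 + k2) * y t)).
  exact: is_deriveD (is_deriveZ k1 dx) dy.
have := is_deriveD (is_deriveX 2 dx) (is_deriveX 2 dxy).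
have -> : x ^+ 2 + (fun s => k1 * x s + y s) ^+ 2 = (fun s => lyap2 k1 (x s) (y s)).
  by apply/funext => s; rewrite lyap2E /= !expr2.
by move/is_derive_eq; apply; rewrite /dissip /qsym2 /GRing.scale /=; ring.
Qed.

Lemma continuous_within_qsym2 (R : realType) (a b c ts : R) (x y : R -> R) :
  {within `[0, ts], continuous x} -> {within `[0, ts], continuous y} ->
  {within `[0, ts], continuous (fun s => qsym2 a b c (x s) (y s))}.
Proof.
move=> cx cy s.
have cc (k : R) : {for s, continuous (fun _ : subspace `[0, ts] => k)} by exact: cst_continuous.
exact: (continuousD (continuousD (continuousM (cc _) (continuousM (cx s) (cx s)))
  (continuousM (continuousM (cc _) (cx s)) (cy s)))
  (continuousM (cc _) (continuousM (cy s) (cy s)))).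
Qed.

Section ClosedLoop.
Variables (R : realType) (n : nat) (k1 k2 bm : R) (beta : R -> R) (ts : R).
Variables (z1 z2 : R -> 'cV[R]_n).
Hypotheses (k1_gt0 : 0 < k1) (k2_gt0 : 0 < k2).
Hypotheses (bm_gt_crit : beta_crit k1 k2 < bm) (bm_le1 : bm <= 1).
Hypothesis beta_range : forall t, 0 < t < ts -> bm <= beta t <= 1.
Hypotheses (z1_cont : {within `[0, ts], continuous z1})
           (z2_cont : {within `[0, ts], continuous z2}).
Hypothesis z1_deriv : forall t, 0 < t < ts -> is_derive t 1 z1 (z2 t).
Hypothesis z2_deriv : forall t, 0 < t < ts ->
  is_derive t 1 z2 (- (beta t *: ((1 + k1 * k2) *: z1 t + (k1 + k2) *: z2 t))).

Let z t := col_mx (z1 t) (z2 t).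
Let th := theta k1 k2 bm.

Lemma coord_lyap_decay i t : 0 <= t <= ts ->
  lyap2 k1 (z1 t i ord0) (z2 t i ord0) * expR (2 * th * t) <=
  lyap2 k1 (z1 0 i ord0) (z2 0 i ord0).
Proof.
apply: (@expR_decay_of_deriv _ (fun s => lyap2 k1 (z1 s i ord0) (z2 s i ord0))
  (fun s => - dissip k1 k2 (beta s) (z1 s i ord0) (z2 s i ord0))).
- by apply: continuous_within_qsym2; exact: continuous_within_coord.
- move=> s hs; apply: lyap2_closed_loop_deriv; first exact: is_derive_coord (z1_deriv hs).
  by have := is_derive_coord i (z2_deriv hs); rewrite !mxE.
- by move=> s hs; rewrite lerN2 dissip_ge_lyap // beta_range.
Qed.

Lemma lyap_decay t : 0 <= t <= ts ->
  qform (scalar_block_mx (1 + k1 ^+ 2) k1 1 n) (z t) * expR (2 * th * t) <=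
  qform (scalar_block_mx (1 + k1 ^+ 2) k1 1 n) (z 0).
Proof.
move=> ht; rewrite !qform_scalar_block_mx mulr_suml; apply: ler_sum => i _.
exact: coord_lyap_decay.
Qed.

Lemma state_decay t : 0 <= t <= ts ->
  enorm (z1 t) <= rho k1 * enorm (z 0) * expR (- (th * t)).
Proof.
move=> ht; set s := enorm (z 0); set E := expR (- (th * t)).
set l := eigmin2 (1 + k1 ^+ 2) k1 1; set L := eigmax2 (1 + k1 ^+ 2) k1 1.
have l_gt0 : 0 < l by have := lam_min_Xmat_gt0 k1; rewrite lam_min_Xmat.
have E2 : expR (2 * th * t) * E ^+ 2 = 1.
  by rewrite /E -expRM_natr -expRD (_ : _ + _ = 0) ?expR0 //; ring.
have weighted : l * (enorm (z1 t) ^+ 2 * expR (2 * th * t)) <= L * s ^+ 2.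
  have [lo _] := andP (qform_scalar_block_mx_bounds (1 + k1 ^+ 2) k1 1 (z t)).
  have [_ hi] := andP (qform_scalar_block_mx_bounds (1 + k1 ^+ 2) k1 1 (z 0)).
  apply: le_trans hi; apply: le_trans (lyap_decay ht).
  rewrite mulrA ler_wpM2r ?expR_ge0 //; apply: le_trans lo.
  by rewrite ler_wpM2l ?(ltW l_gt0) // /z enorm_col_mx_sqr lerDl sqr_ge0.
have rho_s_E_ge0 : 0 <= rho k1 * s * E by rewrite !mulr_ge0 ?sqrtr_ge0 ?enorm_ge0 ?expR_ge0.
rewrite -(ler_sqr (enorm_ge0 _) rho_s_E_ge0) !exprMn rho_sqr lam_max_Xmat lam_min_Xmat -/l -/L.
rewrite -[enorm _ ^+ 2]mulr1 -E2 mulrA ler_wpM2r ?sqr_ge0 //.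
by rewrite [L / l * _]mulrAC ler_pdivlMr // mulrC.
Qed.

End ClosedLoop.

Section GravityTerm.
Variable R : realType.

Lemma invrX_le (k : nat) (x y : R) : 0 < x -> x <= y -> (y ^+ k)^-1 <= (x ^+ k)^-1.
Proof.
move=> x0 xy; have y0 := lt_le_trans x0 xy.
by rewrite lef_pV2 ?posrE ?exprn_gt0 // lerXn2r // nnegrE ltW.
Qed.

Lemma inv_cube_shift_le (x r : R) : 0 <= r -> r < x ->
  2 * (x ^+ 3)^-1 * x <= ((x - r) ^+ 3)^-1 * (x + r) + ((x + r) ^+ 3)^-1 * (x - r).
Proof.
move=> r0 rx; have x0 := le_lt_trans r0 rx.
have xr0 : 0 < x - r by rewrite subr_gt0.
have xr1 : 0 < x + r by rewrite ltr_wpDr.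
rewrite -subr_ge0.
have -> : ((x - r) ^+ 3)^-1 * (x + r) + ((x + r) ^+ 3)^-1 * (x - r) - 2 * (x ^+ 3)^-1 * x
    = 2 * r ^+ 2 * (x ^+ 2 * (9 * x ^+ 2 - 2 * r ^+ 2) + r ^+ 4)
      / (x ^+ 2 * (x - r) ^+ 3 * (x + r) ^+ 3).
  by field; rewrite !gt_eqF.
apply: divr_ge0; last first.
  by rewrite mulr_ge0 ?exprn_ge0 ?(ltW xr1) // mulr_ge0 ?sqr_ge0 // exprn_ge0 // ltW.
rewrite mulr_ge0 ?mulr_ge0 ?sqr_ge0 // addr_ge0 ?exprn_ge0 // mulr_ge0 ?sqr_ge0 //.
by have := mulr_ge0 (ltW xr0) (ltW xr1); nra.
Qed.

Definition grav_bound n (w : 'cV[R]_n) (rp : R) : R :=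
  l1norm w / (enorm w - rp) ^+ 3 - l1norm w / enorm w ^+ 3
  + Num.sqrt 3 * rp / (enorm w - rp) ^+ 3.

Lemma grav_bound_scalar (nw m s rp l1 : R) :
  0 <= s -> s <= rp -> rp < nw -> nw - s <= m -> m <= nw + s -> nw <= l1 ->
  `|(m ^+ 3)^-1 - (nw ^+ 3)^-1| * nw + (m ^+ 3)^-1 * s <=
  l1 / (nw - rp) ^+ 3 - l1 / nw ^+ 3 + Num.sqrt 3 * rp / (nw - rp) ^+ 3.
Proof.
move=> s0 srp rpn m1 m2 nl1.
have rp0 := le_trans s0 srp; have d0 : 0 < nw - rp by rewrite subr_gt0.
have n0 := le_lt_trans rp0 rpn; have m0 : 0 < m by lra.
set A := (m ^+ 3)^-1; set B := (nw ^+ 3)^-1; set D := ((nw - rp) ^+ 3)^-1.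
set E := ((nw + rp) ^+ 3)^-1.
have AD : A <= D by apply: invrX_le => //; lra.
have BD : B <= D by apply: invrX_le => //; lra.
have EA : E <= A by apply: invrX_le => //; lra.
have A0 : 0 <= A by rewrite invr_ge0 exprn_ge0 // ltW.
have E0 : 0 <= E by rewrite invr_ge0 exprn_ge0 // addr_ge0 // ltW.
have D0 := le_trans A0 AD.
have sqrt3_ge1 : 1 <= Num.sqrt (3 : R) by rewrite -{1}sqrtr1 ler_sqrt //; lra.
have shift := inv_cube_shift_le rp0 rpn; rewrite -/B -/D -/E in shift.
apply: (@le_trans _ _ ((D - B) * nw + D * rp)).
  have [BA|AB] := leP B A.
    rewrite ger0_norm ?subr_ge0 //.
    by have := mulr_ge0 A0 s0; have := mulr_ge0 D0 rp0; nra.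
  (* [m > nw]: only the convexity estimate [shift] controls [B - A] *)
  rewrite ltr0_norm ?subr_lt0 //.
  have : E * (nw - rp) <= A * (nw - s) by apply: ler_pM => //; lra.
  nra.
have : (D - B) * nw <= (D - B) * l1 by apply: ler_wpM2l; lra.
have : D * rp <= Num.sqrt 3 * rp * D by have := mulr_ge0 D0 rp0; nra.
rewrite /D /B; lra.
Qed.

Lemma grav_term_le n (w z : 'cV[R]_n) (rp : R) : enorm z <= rp -> rp < enorm w ->
  enorm ((enorm (w - z) ^+ 3)^-1 *: (w - z) - (enorm w ^+ 3)^-1 *: w) <= grav_bound w rp.
Proof.
move=> zrp rpw; set A := (enorm (w - z) ^+ 3)^-1; set B := (enorm w ^+ 3)^-1.
have -> : A *: (w - z) - B *: w = (A - B) *: w + - (A *: z).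
  by rewrite scalerBr scalerBl addrAC.
apply: le_trans (enormD _ _) _.
rewrite enormN !enormZ (ger0_norm (_ : 0 <= A)) ?invr_ge0 ?exprn_ge0 ?enorm_ge0 //.
apply: grav_bound_scalar => //; first exact: enorm_ge0.
- by have := enormB_ge w z; lra.
- exact: enormB_le.
- exact: enorm_le_l1norm.
Qed.

Lemma grav_bound_le (w : 'cV[R]_3) (rp q d : R) :
  0 <= rp -> rp <= q -> 0 < d -> d <= enorm w - rp ->
  grav_bound w rp <= Num.sqrt 3 / d ^+ 2 + 2 * Num.sqrt 3 * q / d ^+ 3.
Proof.
move=> rp0 rpq d0 dd; rewrite /grav_bound.
set nw := enorm w; set l1 := l1norm w; set e := nw - rp.
have e0 := lt_le_trans d0 dd.
have n0 : 0 < nw by apply: lt_le_trans e0 _; rewrite /e lerBlDr lerDl.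
have l1_ge0 : 0 <= l1 := le_trans (enorm_ge0 w) (enorm_le_l1norm w).
have l1_le : l1 <= Num.sqrt 3 * nw := l1norm_le_sqrt_enorm w.
have iD3 : (e ^+ 3)^-1 <= (d ^+ 3)^-1 by apply: invrX_le.
have iD2 : (e ^+ 2)^-1 <= (d ^+ 2)^-1 by apply: invrX_le.
have e3_ge0 : 0 <= (e ^+ 3)^-1 by rewrite invr_ge0 exprn_ge0 // ltW.
have n3_ge0 : 0 <= (nw ^+ 3)^-1 by rewrite invr_ge0 exprn_ge0 // ltW.
have s3_ge0 : 0 <= Num.sqrt (3 : R) := sqrtr_ge0 _.
have h1 : l1 * (e ^+ 3)^-1 <= Num.sqrt 3 * nw * (e ^+ 3)^-1 by apply: ler_wpM2r.
have h2 : Num.sqrt 3 * nw * (e ^+ 3)^-1 =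
    Num.sqrt 3 * (e ^+ 2)^-1 + Num.sqrt 3 * rp * (e ^+ 3)^-1.
  by rewrite (_ : nw = e + rp) ?/e; [field; rewrite gt_eqF | ring].
have h3 : Num.sqrt 3 * (e ^+ 2)^-1 <= Num.sqrt 3 * (d ^+ 2)^-1 by apply: ler_wpM2l.
have h4 : Num.sqrt 3 * rp * (e ^+ 3)^-1 <= Num.sqrt 3 * q * (d ^+ 3)^-1.
  by rewrite -!mulrA; apply: ler_wpM2l => //; apply: ler_pM.
have h5 : 0 <= l1 * (nw ^+ 3)^-1 by rewrite mulr_ge0.
rewrite /e in h1 h2 h3 h4 iD3 iD2 *; lra.
Qed.

End GravityTerm.

Lemma Bset_sub_Eset (R : realType) (k1 r : R) : Bset k1 r `<=` Eset k1 r.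
Proof.
move=> x; rewrite /Bset /Eset /= => hx.
set l := lam_min (Xmat k1); set L := lam_max (Xmat k1).
have l_gt0 : 0 < l := lam_min_Xmat_gt0 k1.
have [_ hi] := andP (qform_scalar_block_mx_bounds (1 + k1 ^+ 2) k1 1 x).
rewrite -lam_max_Xmat -/L in hi; apply: le_lt_trans hi _.
have rx_ge0 : 0 <= rho k1 * enorm x by rewrite mulr_ge0 ?sqrtr_ge0 ?enorm_ge0.
have : (rho k1 * enorm x) ^+ 2 < r ^+ 2.
  by rewrite ltr_pXn2r // ?nnegrE // (le_trans rx_ge0) // ltW.
by rewrite exprMn rho_sqr -/l -/L mulrAC ltr_pdivrMr // [r ^+ 2 * l]mulrC.
Qed.

Section Perturbation.
Variables (R : realType) (P : nat) (mu : 'I_P -> R) (w : 'I_P -> R -> 'cV[R]_3).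
Hypothesis mu_gt0 : forall j, 0 < mu j.

Lemma rmin_le_enorm ts j t : 0 <= t <= ts -> rmin w ts <= enorm (w j t).
Proof.
move=> ht; apply: ge_inf; last by exists j, t.
by exists 0 => _ [j' [t' [_ ->]]]; exact: enorm_ge0.
Qed.

Lemma psiE rh th (v : 'cV[R]_3) s t :
  psi rh th v s t = grav_bound v (rh * s * expR (- (th * t))).
Proof. by rewrite /psi /grav_bound /= !mulrA. Qed.

Lemma f_a_le_grav_bound t z rp : enorm z <= rp -> (forall j, rp < enorm (w j t)) ->
  enorm (f_a mu w t z) <= \sum_j mu j * grav_bound (w j t) rp.
Proof.
move=> zrp rpw; apply: le_trans (enorm_sum _) _; apply: ler_sum => j _.
rewrite enormZ gtr0_norm // ler_pM2l //; exact: grav_term_le.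
Qed.

Lemma psi_sum_le_phi rh th ts s t :
  0 <= rh -> 0 <= th -> 0 <= s -> rh * s < rmin w ts -> 0 <= t <= ts ->
  psi_sum mu w rh th s t <= phi mu w rh th ts s.
Proof.
move=> rh0 th0 s0 rs_lt ht.
set d := rmin w ts - rh * s; have d_gt0 : 0 < d by rewrite subr_gt0.
set M := \sum_j mu j * (Num.sqrt 3 / d ^+ 2 + 2 * Num.sqrt 3 * (rh * s) / d ^+ 3).
have psi_le t' : 0 <= t' <= ts -> psi_sum mu w rh th s t' <= M.
  move=> ht'; apply: ler_sum => j _; rewrite ler_pM2l // psiE.
  have E_le1 : expR (- (th * t')) <= 1.
    by rewrite expR_le1 oppr_le0 mulr_ge0 // (andP ht').1.
  have rsE_ge0 : 0 <= rh * s * expR (- (th * t')) by rewrite !mulr_ge0 ?expR_ge0.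
  have rsE_le : rh * s * expR (- (th * t')) <= rh * s.
    by rewrite ler_piMr // mulr_ge0.
  apply: grav_bound_le => //; have := rmin_le_enorm j ht'; rewrite /d; lra.
apply: sup_upper_bound; last by exists t.
by split; [exists (psi_sum mu w rh th s t), t | exists M => _ [t' [ht' ->]]; exact: psi_le].
Qed.

End Perturbation.

Theorem mainTheorem7 (R : realType) (P : nat) (mu : 'I_P -> R)
  (rr : 'I_P -> R -> 'cV[R]_3) (rstar : R -> 'cV[R]_3)
  (k1 k2 beta_min : R) (beta : R -> R) (ts : R)
  (z1 z2 : R -> 'cV[R]_3) :
  (0 < P)%N ->
  (forall j, 0 < mu j) ->
  (forall j, C1_nonneg (rr j)) ->
  (forall j : 'I_P, val j = 0%N -> forall t : R, 0 <= t -> rr j t = 0) ->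
  C1_nonneg rstar ->
  (forall j t, 0 <= t -> rstar t != rr j t) ->
  let w := fun (j : 'I_P) (t : R) => rr j t - rstar t in
  0 < k1 -> 0 < k2 ->
  beta_crit k1 k2 < beta_min <= 1 ->
  {within `[0, +oo[, continuous beta} ->
  (forall t, 0 <= t -> beta_min <= beta t <= 1) ->
  0 < ts ->
  let u := fun t : R =>
    - (beta t *: ((1 + k1 * k2) *: z1 t + (k1 + k2) *: z2 t)) - f_a mu w t (z1 t) in
  {within `[0, ts], continuous z1} ->
  {within `[0, ts], continuous z2} ->
  (forall t, 0 < t < ts -> is_derive t 1 z1 (z2 t)) ->
  (forall t, 0 < t < ts -> is_derive t 1 z2 (f_a mu w t (z1 t) + u t)) ->
  (forall t j, 0 <= t <= ts -> z1 t != w j t) ->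
  let z0 := col_mx (z1 0) (z2 0) in
  let r := rmin w ts in
  let rh := rho k1 in
  let th := theta k1 k2 beta_min in
  Bset k1 r z0 ->
  Eset k1 r z0 /\
  (forall t, 0 <= t <= ts ->
     enorm (f_a mu w t (z1 t)) <= psi_sum mu w rh th (enorm z0) t /\
     psi_sum mu w rh th (enorm z0) t <= phi mu w rh th ts (enorm z0)).
Proof.
(* The regularity of [rr], [rstar], [beta] and the non-collision of [z1] only serve to
   produce the closed-loop solution, which is given here. *)
move=> _ mu_gt0 _ _ _ _ w k1_gt0 k2_gt0 /andP[bm_gt_crit bm_le1] _ beta_range _ u.
move=> z1_cont z2_cont z1_deriv z2_deriv _ z0 r rh th z0_B.
have z2_deriv' t : 0 < t < ts ->
    is_derive t 1 z2 (- (beta t *: ((1 + k1 * k2) *: z1 t + (k1 + k2) *: z2 t))).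
  by move=> ht; have := z2_deriv t ht; rewrite /u addrC subrK.
have beta_range' t : 0 < t < ts -> beta_min <= beta t <= 1.
  by case/andP => t_gt0 _; exact/beta_range/ltW.
have decay := state_decay k1_gt0 k2_gt0 bm_gt_crit bm_le1 beta_range' z1_cont z2_cont
  z1_deriv z2_deriv'.
have rh_ge0 : 0 <= rh := sqrtr_ge0 _.
have th_ge0 : 0 <= th := theta_ge0 k1_gt0 k2_gt0 bm_gt_crit bm_le1.
split; first exact: Bset_sub_Eset.
have z0_lt : rh * enorm z0 < r := z0_B.
move=> t ht; split; last exact: psi_sum_le_phi (enorm_ge0 _) z0_lt ht.
rewrite /psi_sum; under eq_bigr do rewrite psiE.
apply: (f_a_le_grav_bound mu_gt0); first exact: (decay t ht).
move=> j; have w_ge_r : r <= enorm (w j t) := rmin_le_enorm w j ht.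
apply: le_lt_trans (lt_le_trans z0_lt w_ge_r).
by rewrite ler_piMr ?mulr_ge0 ?enorm_ge0 // expR_le1 oppr_le0 mulr_ge0 // (andP ht).1.
Qed.
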